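(* Let $G$ be a compact Hausdorff topological group and $p\colon E\to B$ a $G$-map of Hausdorff $G$-spaces. If $p(E^H)=B^H$ for all closed subgroups $H$ of $G$, then $\mathrm{secat}_G(p)\le\mathrm{cat}_G(B)$.
   Context: $X^H=\{x: hx=x\ \forall h\in H\}$. A $G$-homotopy is an equivariant homotopy with $G$ acting trivially on $I$. An invariant set $U\subseteq B$ is $G$-categorical if its inclusion is $G$-homotopic to a map with values in a single orbit; $\mathrm{cat}_G(B)$ is the least $k$ such that $B$ is covered by $k$ open $G$-categorical sets. $\mathrm{secat}_G(p)$ is the least $k$ such that $B$ is covered by $k$ invariant open sets $U_i$ each admitting a $G$-map $s\colon U_i\to E$ with $ps$ $G$-homotopic to the inclusion ($\infty$ if none). *)

From HB Require Import structures.
From mathcomp Require Import all_boot all_order all_algebra.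
From mathcomp Require Import all_classical all_reals topology normedtype.
Import numFieldNormedType.Exports.
Set Implicit Arguments. Unset Strict Implicit. Unset Printing Implicit Defensive.
Import Order.TTheory GRing.Theory Num.Theory.
Local Open Scope classical_set_scope.
Local Open Scope ring_scope.

Section Equivariant.
Variables (R : realType) (G : topologicalType)
  (mul : G -> G -> G) (inv : G -> G) (one : G).

Definition is_topological_group : Prop :=
  [/\ (forall a b c, mul a (mul b c) = mul (mul a b) c),
      (forall a, mul one a = a /\ mul a one = a),
      (forall a, mul (inv a) a = one /\ mul a (inv a) = one),
      continuous (fun z : G * G => mul z.1 z.2) &
      continuous inv].

Definition is_G_space (X : topologicalType) (a : G -> X -> X) : Prop :=
  [/\ (forall x, a one x = x),
      (forall g h x, a (mul g h) x = a g (a h x)) &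
      continuous (fun z : G * X => a z.1 z.2)].

Definition is_G_map (X Y : topologicalType) (aX : G -> X -> X)
  (aY : G -> Y -> Y) (f : X -> Y) : Prop :=
  continuous f /\ (forall g x, f (aX g x) = aY g (f x)).

Definition closed_subgroup (H : set G) : Prop :=
  [/\ closed H, H one, (forall g h, H g -> H h -> H (mul g h)) &
      (forall g, H g -> H (inv g))].

Definition fixed_pts (X : Type) (a : G -> X -> X) (H : set G) : set X :=
  [set x | forall h, H h -> a h x = x].

Definition invariant (X : Type) (a : G -> X -> X) (U : set X) : Prop :=
  forall g x, U x -> U (a g x).

Definition orbit (X : Type) (a : G -> X -> X) (x0 : X) : set X :=
  [set y | exists g, y = a g x0].

Definition G_homotopic (X Y : topologicalType) (aX : G -> X -> X)
  (aY : G -> Y -> Y) (U : set X) (F0 F1 : X -> Y) : Prop :=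
  exists Hm : X * R -> Y,
    [/\ {within (U `*` [set t : R | (0 <= t <= 1)%R]) : set (X * R), continuous Hm},
        (forall x, U x -> Hm (x, 0%R) = F0 x /\ Hm (x, 1%R) = F1 x) &
        (forall g x t, U x -> (0 <= t <= 1)%R ->
           Hm (aX g x, t) = aY g (Hm (x, t)))].

Definition G_categorical (B : topologicalType) (aB : G -> B -> B)
  (U : set B) : Prop :=
  invariant aB U /\
  exists (F1 : B -> B) (b0 : B),
    (forall b, U b -> orbit aB b0 (F1 b)) /\ G_homotopic aB aB U id F1.

Definition G_section_on (E B : topologicalType) (aE : G -> E -> E)
  (aB : G -> B -> B) (p : E -> B) (U : set B) : Prop :=
  exists s : B -> E,
    [/\ {within U, continuous s},
        (forall g b, U b -> s (aB g b) = aE g (s b)) &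
        G_homotopic aB aB U (p \o s) id].

Definition open_cover_by (B : topologicalType) (P : set B -> Prop) (k : nat)
  : Prop :=
  exists Us : nat -> set B,
    (forall i, (i < k)%N -> open (Us i) /\ P (Us i)) /\
    (forall b, exists2 i, (i < k)%N & Us i b).

(* least k with property Q, or None (= infinity) if there is none *)
Definition least_nat (Q : nat -> Prop) : option nat :=
  match pselect (exists k, Q k) with
  | left h =>
      Some (@ex_minn (fun k => `[< Q k >])
              (let: ex_intro k hk := h in ex_intro _ k (asboolT hk)))
  | right _ => None
  end.

Definition le_oinf (a b : option nat) : Prop :=
  match b with
  | None => True
  | Some m => match a with Some n => (n <= m)%N | None => False end
  end.

Definition cat_G (B : topologicalType) (aB : G -> B -> B) : option nat :=
  least_nat (open_cover_by (G_categorical aB)).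

Definition secat_G (E B : topologicalType) (aE : G -> E -> E)
  (aB : G -> B -> B) (p : E -> B) : option nat :=
  least_nat (open_cover_by
    (fun U => invariant aB U /\ G_section_on aE aB p U)).

End Equivariant.

From Pilot Require Import Defs.
From HB Require Import structures.
From mathcomp Require Import all_boot all_order all_algebra.
From mathcomp Require Import all_classical all_reals topology normedtype.
From mathcomp Require Import lra.
Import numFieldNormedType.Exports.
Import Order.TTheory GRing.Theory Num.Theory.
Local Open Scope classical_set_scope.

(* If U is G-categorical, deforming U into an orbit G.b0, choose a lift
   e0 of b0 fixed by the stabilizer of b0; then g.b0 |-> g.e0 is a well-defined
   equivariant section of p over the orbit, continuous because the orbit map of
   the compact group G is closed. Composing it with the end of the deformation
   gives an equivariant homotopy section over U, so every categorical cover is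
   a sectional cover. *)

Lemma le_oinf_least_nat (P Q : nat -> Prop) :
  (forall k, P k -> Q k) -> le_oinf (least_nat Q) (least_nat P).
Proof.
move=> PQ; rewrite /least_nat.
case: (pselect (exists k, P k)) => [[k Pk]|_]; last by case: pselect.
case: pselect => [Qex|]; last by case; exists k; exact: PQ.
case: ex_minnP => n _ minQ; case: ex_minnP => m /asboolP Pm _ /=.
exact/minQ/asboolP/PQ.
Qed.

Lemma continuous_pair {X Y Z : topologicalType} (f : X -> Y) (g : X -> Z) :
  continuous f -> continuous g -> continuous (fun x => (f x, g x)).
Proof. by move=> cf cg x; apply: cvg_pair; [exact: cf | exact: cg]. Qed.

Lemma continuous_partial1 {X Y Z : topologicalType} {f : X -> Y -> Z} (y : Y) :
  continuous (fun z : X * Y => f z.1 z.2) -> continuous (f^~ y).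
Proof.
move=> cf; have cpair : continuous (fun x : X => (x, y)).
  by apply: continuous_pair; [move=> x; exact: cvg_id | exact: cst_continuous].
by move=> x; apply: (continuous_comp (cpair x) (cf (x, y))).
Qed.

Lemma within_continuous_comp_within (X Y Z : topologicalType)
    (A : set X) (B : set Y) (f : X -> Y) (g : Y -> Z) :
  {within A, continuous f} -> (forall x, A x -> B (f x)) ->
  {within B, continuous g} -> {within A, continuous (g \o f)}.
Proof.
move=> cf fAB cg; apply/continuous_closedP => C cC; apply/closed_subspaceP.
case/continuous_closedP/(_ _ cC)/closed_subspaceP: cg => V cV VE.
case/continuous_closedP/(_ _ cV)/closed_subspaceP: cf => W cW WE.
exists W => //; rewrite WE; apply/seteqP; split => x [Vx Ax]; split => //.
- have : (V `&` B) (f x) by split => //; exact: fAB.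
  by rewrite VE => -[].
- have : (from_subspace B g @^-1` C `&` B) (f x) by split => //; exact: fAB.
  by rewrite -VE => -[].
Qed.

Lemma open_cover_byW (B : topologicalType) (P Q : set B -> Prop) (k : nat) :
  (forall U, P U -> Q U) -> open_cover_by P k -> open_cover_by Q k.
Proof.
move=> PQ [Us [Us_P Us_cover]]; exists Us; split => // i ik.
by have [oU PU] := Us_P i ik; split; last exact: PQ.
Qed.

Definition stabilizer {G X : Type} (a : G -> X -> X) (x : X) : set G :=
  [set g | a g x = x].

Lemma stabilizer_closed_subgroup (G : topologicalType)
    (mul : G -> G -> G) (inv : G -> G) (one : G)
    (X : topologicalType) (a : G -> X -> X) (x : X) :
  is_topological_group mul inv one -> is_G_space mul one a ->
  hausdorff_space X -> closed_subgroup mul inv one (stabilizer a x).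
Proof.
move=> [_ _ invK _ _] [a1 aM ca] hX; split.
- have -> : stabilizer a x = (a^~ x) @^-1` [set x] by [].
  apply: (continuous_closedP _).1; first exact: continuous_partial1.
  exact/accessible_closed_set1/hausdorff_accessible.
- exact: a1.
- by move=> g h gx hx; rewrite /stabilizer /= aM hx gx.
- by move=> g gx; rewrite /stabilizer /= -{1}gx -aM (invK g).1 a1.
Qed.

Section GHomotopy.
Context {R : realType} {G X Y : topologicalType}
  {aX : G -> X -> X} {aY : G -> Y -> Y} {U : set X}.

Let I01 := [set t : R | (0 <= t <= 1)%R].

Lemma G_homotopic_sym {F0 F1 : X -> Y} :
  G_homotopic R aX aY U F0 F1 -> G_homotopic R aX aY U F1 F0.
Proof.
have I01_flip t : I01 t -> I01 (1 - t)%R.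
  by move=> /andP[t0 t1]; apply/andP; split; lra.
move=> [Hm [cHm Hm01 HmM]]; exists (fun z => Hm (z.1, 1 - z.2)%R); split.
- apply: (@within_continuous_comp_within _ _ _ _ (U `*` I01)
    (fun z : X * R => (z.1, 1 - z.2)%R) Hm) => //.
    apply/continuous_subspaceT/continuous_pair => z; first exact: cvg_fst.
    by apply: continuousB; [exact: cvg_cst | exact: cvg_snd].
  by move=> [x t] [Ux It]; split => //; exact: I01_flip.
- by move=> x Ux /=; rewrite subr0 subrr; case: (Hm01 x Ux).
- by move=> g x t Ux It /=; apply: HmM => //; exact: I01_flip.
Qed.

Lemma G_homotopic_eq_r {F0 F1 F1' : X -> Y} :
  (forall x, U x -> F1 x = F1' x) ->
  G_homotopic R aX aY U F0 F1 -> G_homotopic R aX aY U F0 F1'.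
Proof.
move=> F11' [Hm [cHm Hm01 HmM]]; exists Hm; split => // x Ux.
by rewrite -F11' //; exact: Hm01.
Qed.

Lemma G_homotopic_end {F0 F1 : X -> Y} :
  Defs.invariant aX U -> G_homotopic R aX aY U F0 F1 ->
  {within U, continuous F1} /\ (forall g x, U x -> F1 (aX g x) = aY g (F1 x)).
Proof.
move=> invU [Hm [cHm Hm01 HmM]].
have I1 : I01 1%R by rewrite /I01 /= ler01 lexx.
have F1E x : U x -> F1 x = Hm (x, 1%R) by case/Hm01.
split; last by move=> g x Ux; rewrite !F1E ?HmM //; exact: invU.
apply: (@subspace_eq_continuous _ _ _ (Hm \o (fun x => (x, 1%R)))).
  by move=> x /set_mem Ux; rewrite /from_subspace F1E.
apply: (@within_continuous_comp_within _ _ _ _ (U `*` I01)) => //.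
apply/continuous_subspaceT/continuous_pair; last exact: cst_continuous.
by move=> x; exact: cvg_id.
Qed.

End GHomotopy.

Section EquivariantLift.
Context (R : realType) (G : topologicalType)
  (mul : G -> G -> G) (inv : G -> G) (one : G).
Hypotheses (G_group : is_topological_group mul inv one)
  (G_compact : compact [set: G]).
Context (E B : topologicalType) (aE : G -> E -> E) (aB : G -> B -> B).
Hypotheses (E_Gspace : is_G_space mul one aE) (B_Gspace : is_G_space mul one aB)
  (B_hausdorff : hausdorff_space B).

Section OrbitLift.
Variables (b0 : B) (e0 : E).
Hypothesis e0_fixed : fixed_pts aE (stabilizer aB b0) e0.

Definition orbit_lift (y : B) : E := aE (xget one [set g | y = aB g b0]) e0.

Lemma orbit_liftE g : orbit_lift (aB g b0) = aE g e0.
Proof.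
rewrite /orbit_lift; set g' := xget _ _.
have gb0 : aB g b0 = aB g' b0.
  by rewrite /g' -(@xgetPex _ one [set g' | aB g b0 = aB g' b0]) //; exists g.
case: G_group E_Gspace B_Gspace => assoc unit invK _ _ [_ aEM _] [aB1 aBM _].
have stab : stabilizer aB b0 (mul (inv g) g').
  by rewrite /stabilizer /= aBM -gb0 -aBM (invK g).1 aB1.
have -> : g' = mul g (mul (inv g) g') by rewrite assoc (invK g).2 (unit g').1.
by rewrite aEM (e0_fixed _ stab).
Qed.

Lemma orbit_lift_equivariant g y :
  Defs.orbit aB b0 y -> orbit_lift (aB g y) = aE g (orbit_lift y).
Proof.
case: E_Gspace B_Gspace => _ aEM _ [_ aBM _] [h ->].
by rewrite -aBM !orbit_liftE aEM.
Qed.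

Lemma orbit_lift_section (p : E -> B) y :
  (forall g e, p (aE g e) = aB g (p e)) -> p e0 = b0 ->
  Defs.orbit aB b0 y -> p (orbit_lift y) = y.
Proof. by move=> pM pe0 [g ->]; rewrite orbit_liftE pM pe0. Qed.

(* The preimage of a closed C is the image of the compact set
   [set g | g.e0 \in C] under g |-> g.b0, hence closed in B. *)
Lemma orbit_lift_continuous : {within Defs.orbit aB b0, continuous orbit_lift}.
Proof.
case: E_Gspace B_Gspace => _ _ caE [_ _ caB].
apply/continuous_closedP => C cC; apply/closed_subspaceP.
exists ((aB^~ b0) @` ((aE^~ e0) @^-1` C)).
  apply: compact_closed B_hausdorff _; apply: continuous_compact.
    exact/continuous_subspaceT/continuous_partial1.
  apply: subclosed_compact G_compact _ => //.
  by move/continuous_closedP: (continuous_partial1 e0 caE); apply.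
apply/seteqP; split => y [Cy orby]; split => //.
- by case: Cy => g Cg <-; rewrite /from_subspace /= orbit_liftE.
- by case: orby Cy => g ->; rewrite /from_subspace /= orbit_liftE => Cg; exists g.
Qed.

End OrbitLift.

Variable p : E -> B.
Hypotheses (p_equivariant : forall g e, p (aE g e) = aB g (p e))
  (p_fixed : forall H : set G, closed_subgroup mul inv one H ->
     p @` fixed_pts aE H = fixed_pts aB H).

Lemma G_categorical_section (U : set B) :
  G_categorical R aB U -> G_section_on R aE aB p U.
Proof.
move=> [invU [F1 [b0 [F1_orbit hom]]]].
have [cF1 F1M] := G_homotopic_end invU hom.
have : fixed_pts aB (stabilizer aB b0) b0 by [].
rewrite -p_fixed; last exact: stabilizer_closed_subgroup.
case=> e0 e0_fixed pe0.
exists (orbit_lift b0 e0 \o F1); split.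
- apply: within_continuous_comp_within cF1 F1_orbit _.
  exact: orbit_lift_continuous.
- move=> g b Ub /=.
  by rewrite F1M // orbit_lift_equivariant //; exact: F1_orbit.
- apply/G_homotopic_sym/(G_homotopic_eq_r _ hom) => b Ub /=.
  by rewrite orbit_lift_section //; exact: F1_orbit.
Qed.

End EquivariantLift.

Theorem proposition4p5 (R : realType) (G : topologicalType)
  (mul : G -> G -> G) (inv : G -> G) (one : G)
  (E B : topologicalType) (aE : G -> E -> E) (aB : G -> B -> B) (p : E -> B) :
  is_topological_group mul inv one ->
  compact [set: G] -> hausdorff_space G ->
  is_G_space mul one aE -> is_G_space mul one aB ->
  hausdorff_space E -> hausdorff_space B ->
  is_G_map aE aB p ->
  (forall H : set G, closed_subgroup mul inv one H ->
     p @` fixed_pts aE H = fixed_pts aB H) ->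
  le_oinf (secat_G R aE aB p) (cat_G R aB).
Proof.
move=> Ggroup cG _ EGspace BGspace _ hB pGmap p_fixed.
apply: le_oinf_least_nat => k; apply: open_cover_byW => U catU.
split; first exact: catU.1.
exact: (G_categorical_section _ _ _ _ _ Ggroup cG _ _ _ _ EGspace BGspace hB _
  pGmap.2 p_fixed _ catU).
Qed.
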